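(* Let $A,B$ be unital $k$-algebras and $f:B\to A$ an algebra homomorphism, not necessarily unital, such that $f(1_B)$ lies in the center of $A$. Then the modulation of $f$ is invertible in $\mathsf{Alg}$ if and only if $f$ is an isomorphism from $B$ onto $A\cdot f(1_B)$ and $f(1_B)$ is not a zero divisor in $A$.
   Context: $k$ is a commutative ring; all algebras are unital $k$-algebras. The category $\mathsf{Alg}$ has unital $k$-algebras as objects and, as morphisms to $A$ from $B$, isomorphism classes of biunital $(A,B)$-bimodules, composed by $X\otimes_B Y$; invertible morphisms are Morita equivalences. The modulation of a not necessarily unital homomorphism $f:B\to A$ is the left ideal $A\cdot f(1_B)\subset A$ with the biunital $(A,B)$-bimodule structure $a\cdot x\cdot b=a\,x\,f(b)$. *)

From HB Require Import structures.
From mathcomp Require Import all_boot all_algebra.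
From Stdlib Require Import ProofIrrelevance.
Set Implicit Arguments. Unset Strict Implicit. Unset Printing Implicit Defensive.
Import GRing.Theory.
Local Open Scope ring_scope.

(* The carrier is an abelian group given by explicit
   operations, so that sub-objects (e.g. left ideals) can be built directly. *)
Record bimod (k : comPzRingType) (R S : algType k) := Bimod {
  bm_car :> Type;
  bm_zero : bm_car;
  bm_add : bm_car -> bm_car -> bm_car;
  bm_opp : bm_car -> bm_car;
  bm_l : R -> bm_car -> bm_car;
  bm_r : bm_car -> S -> bm_car;
  bm_addA : forall x y z, bm_add x (bm_add y z) = bm_add (bm_add x y) z;
  bm_addC : forall x y, bm_add x y = bm_add y x;
  bm_add0 : forall x, bm_add bm_zero x = x;
  bm_addN : forall x, bm_add (bm_opp x) x = bm_zero;
  bm_lD : forall r x y, bm_l r (bm_add x y) = bm_add (bm_l r x) (bm_l r y);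
  bm_Dl : forall r r' x, bm_l (r + r') x = bm_add (bm_l r x) (bm_l r' x);
  bm_lM : forall r r' x, bm_l (r * r') x = bm_l r (bm_l r' x);
  bm_l1 : forall x, bm_l 1 x = x;
  bm_rD : forall s x y, bm_r (bm_add x y) s = bm_add (bm_r x s) (bm_r y s);
  bm_Dr : forall s s' x, bm_r x (s + s') = bm_add (bm_r x s) (bm_r x s');
  bm_rM : forall s s' x, bm_r x (s * s') = bm_r (bm_r x s) s';
  bm_r1 : forall x, bm_r x 1 = x;
  bm_lr : forall r x s, bm_l r (bm_r x s) = bm_r (bm_l r x) s;
  bm_kcentral : forall (c : k) x, bm_l (c%:A) x = bm_r x (c%:A)
}.

(* "X (x)_S Y is isomorphic to R as (R,R)-bimodules", for X an (R,S)- and Y an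
   (S,R)-bimodule, expressed via the universal property of the tensor
   product: there is an S-balanced biadditive (R,R)-bilinear map
   mu : X x Y -> R which is universal among S-balanced biadditive maps. *)
Definition biadd_balanced (k : comPzRingType) (R S : algType k)
  (X : bimod R S) (Y : bimod S R) (M : zmodType) (beta : X -> Y -> M) : Prop :=
  [/\ forall x x' y, beta (bm_add x x') y = beta x y + beta x' y,
      forall x y y', beta x (bm_add y y') = beta x y + beta x y' &
      forall x s y, beta (bm_r x s) y = beta x (bm_l s y)].

Definition tensor_iso_unit (k : comPzRingType) (R S : algType k)
  (X : bimod R S) (Y : bimod S R) : Prop :=
  exists mu : X -> Y -> R,
    [/\ biadd_balanced mu,
        forall r x y, mu (bm_l r x) y = r * mu x y,
        forall x y r, mu x (bm_r y r) = mu x y * r &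
        forall (M : zmodType) (beta : X -> Y -> M), biadd_balanced beta ->
          exists phi : R -> M,
            [/\ {morph phi : u v / u + v >-> u + v},
                (forall x y, beta x y = phi (mu x y)) &
                forall psi : R -> M, {morph psi : u v / u + v >-> u + v} ->
                  (forall x y, beta x y = psi (mu x y)) -> psi = phi]].

(* The class of X : (R,S)-bimodule is invertible in Alg (a Morita equivalence):
   there is Y with X (x)_S Y ~ R and Y (x)_R X ~ S. *)
Definition invertible_bimod (k : comPzRingType) (R S : algType k)
  (X : bimod R S) : Prop :=
  exists Y : bimod S R, tensor_iso_unit X Y /\ tensor_iso_unit Y X.

Definition nu_alg_hom (k : comPzRingType) (B A : algType k) (f : B -> A) : Prop :=
  [/\ forall x y, f (x + y) = f x + f y,
      forall (c : k) x, f (c *: x) = c *: f x &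
      forall x y, f (x * y) = f x * f y].

Definition in_left_ideal (k : comPzRingType) (A : algType k) (e x : A) : Prop :=
  exists a : A, x = a * e.

Section Modulation.
Variables (k : comPzRingType) (A B : algType k) (f : B -> A).
Hypothesis hf : nu_alg_hom f.

Let e := f 1.
Let T := {x : A | in_left_ideal e x}.

Lemma mod_ideal0 : in_left_ideal e 0.
Proof. by exists 0; rewrite mul0r. Qed.
Lemma mod_idealD x y : in_left_ideal e x -> in_left_ideal e y -> in_left_ideal e (x + y).
Proof. by move=> [a ->] [b ->]; exists (a + b); rewrite mulrDl. Qed.
Lemma mod_idealN x : in_left_ideal e x -> in_left_ideal e (- x).
Proof. by move=> [a ->]; exists (- a); rewrite mulNr. Qed.
Lemma mod_ideall a x : in_left_ideal e x -> in_left_ideal e (a * x).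
Proof. by move=> [b ->]; exists (a * b); rewrite mulrA. Qed.
Lemma mod_idealr x b : in_left_ideal e x -> in_left_ideal e (x * f b).
Proof.
case: hf => _ _ hM [a ->]; exists (a * f b).
by rewrite /e -mulrA -hM mul1r -{1}[b](mulr1 b) hM mulrA.
Qed.

Let m0 : T := exist _ 0 mod_ideal0.
Let mD (x y : T) : T := exist _ (proj1_sig x + proj1_sig y)
  (mod_idealD (proj2_sig x) (proj2_sig y)).
Let mN (x : T) : T := exist _ (- proj1_sig x) (mod_idealN (proj2_sig x)).
Let ml (a : A) (x : T) : T := exist _ (a * proj1_sig x) (mod_ideall a (proj2_sig x)).
Let mr (x : T) (b : B) : T := exist _ (proj1_sig x * f b) (mod_idealr b (proj2_sig x)).

Let sigE (x y : T) : proj1_sig x = proj1_sig y -> x = y.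
Proof.
case: x y => [x px] [y py] /= exy; subst y.
by rewrite (proof_irrelevance _ px py).
Qed.

Local Ltac sg := move=> *; apply: sigE => /=.


Definition modulation : bimod A B.
Proof.
refine (@Bimod k A B T m0 mD mN ml mr _ _ _ _ _ _ _ _ _ _ _ _ _ _).
- by sg; rewrite addrA.
- by sg; rewrite addrC.
- by sg; rewrite add0r.
- by sg; rewrite addNr.
- by sg; rewrite mulrDr.
- by sg; rewrite mulrDl.
- by sg; rewrite mulrA.
- by sg; rewrite mul1r.
- by sg; rewrite mulrDl.
- by case: hf => hD _ _; sg; rewrite hD mulrDr.
- by case: hf => _ _ hM; sg; rewrite hM mulrA.
- move=> [x [a ha]]; apply: sigE => /=; rewrite ha.
  by case: hf => _ _ hM; rewrite -mulrA -hM mul1r.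
- by sg; rewrite mulrA.
- move=> c [x [a ha]]; apply: sigE => /=; rewrite ha.
  case: hf => _ hZ hM; rewrite hZ -scalerAr -mulrA -hM mul1r.
  by rewrite -!scalerAl mul1r.
Defined.
End Modulation.

From HB Require Import structures.
From mathcomp Require Import all_boot all_algebra.
From Stdlib Require Import ProofIrrelevance FunctionalExtensionality.
Set Implicit Arguments. Unset Strict Implicit. Unset Printing Implicit Defensive.
Import GRing.Theory.
Local Open Scope ring_scope.

(* The element e := f 1 is a central idempotent, so it is a non-zero-divisor
   exactly when e = 1.  A universal balanced map mu : X x Y -> R can be
   cancelled on the right: the values mu x y * r determine r.  For an inverse
   of the modulation X = A e this forces e = 1 (e fixes X, hence every value
   of mu), the injectivity of f (b is recovered from its right action x f b on
   X), and the surjectivity of f onto A e: right multiplication by a is a left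
   A-linear endomorphism of X, hence acts through nu like the right action of
   some b, and nu separates the points of X.  Conversely, if f is an
   isomorphism onto A e = A, then A with B acting through f is an inverse,
   with multiplication of A and its pullback to B as the two products. *)

Definition balanced_universal (k : comPzRingType) (R S : algType k)
    (X : bimod R S) (Y : bimod S R) (mu : X -> Y -> R) : Prop :=
  forall (M : zmodType) (beta : X -> Y -> M), biadd_balanced beta ->
    exists phi : R -> M,
      [/\ {morph phi : u v / u + v >-> u + v},
          (forall x y, beta x y = phi (mu x y)) &
          forall psi : R -> M, {morph psi : u v / u + v >-> u + v} ->
            (forall x y, beta x y = psi (mu x y)) -> psi = phi].

Section BalancedUniversal.
Variables (k : comPzRingType) (R S : algType k) (X : bimod R S) (Y : bimod S R).
Variable mu : X -> Y -> R.
Hypotheses (mu_bal : biadd_balanced mu) (mu_univ : balanced_universal mu).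
Hypothesis mu_l : forall r x y, mu (bm_l r x) y = r * mu x y.
Hypothesis mu_r : forall x y r, mu x (bm_r y r) = mu x y * r.

Lemma balanced_universal_eq (M : zmodType) (psi1 psi2 : R -> M) :
    {morph psi1 : u v / u + v >-> u + v} -> {morph psi2 : u v / u + v >-> u + v} ->
  (forall x y, psi1 (mu x y) = psi2 (mu x y)) -> psi1 = psi2.
Proof.
move=> psi1D psi2D psi12; have [m1 m2 m3] := mu_bal.
have bal : biadd_balanced (fun x y => psi1 (mu x y)).
  by split=> *; rewrite ?m1 ?m2 ?m3 ?psi1D.
have [phi [_ _ phi_uniq]] := mu_univ bal.
by rewrite (phi_uniq psi1) // (phi_uniq psi2).
Qed.

Lemma balanced_universal_mulIr (r r' : R) :
  (forall x y, mu x y * r = mu x y * r') -> r = r'.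
Proof.
move=> eq_r.
have := @balanced_universal_eq _ ( *%R^~ r) ( *%R^~ r') (fun u v => mulrDl u v r) (fun u v => mulrDl u v r') eq_r.
by move/(congr1 (fun g => g 1)); rewrite !mul1r.
Qed.

Lemma central_act_id_eq1 (c : R) :
  (forall r, r * c = c * r) -> (forall x : X, bm_l c x = x) -> c = 1.
Proof.
by move=> cC cX; apply: balanced_universal_mulIr => x y; rewrite mulr1 cC -mu_l cX.
Qed.

Lemma act_r_faithful (r r' : R) : (forall y : Y, bm_r y r = bm_r y r') -> r = r'.
Proof. by move=> eq_act; apply: balanced_universal_mulIr => x y; rewrite -!mu_r eq_act. Qed.

Lemma linear_endo_act_r (T : Y -> Y) :
    {morph T : y y' / bm_add y y' >-> bm_add y y'} ->
    (forall s (y : Y), T (bm_l s y) = bm_l s (T y)) ->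
  exists r, forall x y, mu x (T y) = mu x (bm_r y r).
Proof.
move=> TD TL; have [m1 m2 m3] := mu_bal.
have bal : biadd_balanced (fun x y => mu x (T y)).
  by split=> *; rewrite ?m1 ?TD ?m2 ?m3 ?TL.
have [phi [phiD phiE _]] := mu_univ bal.
have phiL r : phi r = r * phi 1.
  have := @balanced_universal_eq _ (fun s => phi (r * s)) (fun s => r * phi s).
  move=> /(_ _ _ _) /(congr1 (fun g => g 1)); rewrite mulr1; apply.
  - by move=> u v; rewrite mulrDr phiD.
  - by move=> u v; rewrite phiD mulrDr.
  - by move=> x y; rewrite -mu_l -!phiE mu_l.
by exists (phi 1) => x y; rewrite mu_r -phiL -phiE.
Qed.

Lemma balanced_universal_separates (nu : Y -> X -> S) (p : X -> R) :
    balanced_universal nu -> {morph p : x x' / bm_add x x' >-> x + x'} ->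
    (forall r (x : X), p (bm_l r x) = r * p x) ->
  forall x1 x2, (forall y, nu y x1 = nu y x2) -> p x1 = p x2.
Proof.
move=> nu_univ pD pL x1 x2 eq_nu.
apply: balanced_universal_mulIr => x y; have [m1 m2 m3] := mu_bal.
pose gam y' x' := mu x (bm_r y' (p x')).
have bal : biadd_balanced gam.
  by split=> *; rewrite /gam ?bm_rD ?m2 ?pD ?bm_Dr ?pL ?bm_rM.
have [ph [_ phE _]] := nu_univ _ gam bal.
by rewrite -!mu_r -/(gam y x1) -/(gam y x2) !phE eq_nu.
Qed.

End BalancedUniversal.

Lemma tensor_iso_unit_of_generator (k : comPzRingType) (R S : algType k)
    (X : bimod R S) (Y : bimod S R) (mu : X -> Y -> R) (x1 : X) :
    biadd_balanced mu -> (forall r x y, mu (bm_l r x) y = r * mu x y) ->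
    (forall x y r, mu x (bm_r y r) = mu x y * r) ->
    (forall x, exists s, x = bm_r x1 s) -> bijective (mu x1) ->
  tensor_iso_unit X Y.
Proof.
move=> mu_bal mu_l mu_r x1_gen [iota muK iotaK]; exists mu; split=> //.
move=> M beta [bD1 bD2 b_bal]; have [_ m2 m3] := mu_bal.
have iotaD : {morph iota : u v / u + v >-> bm_add u v}.
  by move=> u v; apply: (can_inj muK); rewrite m2 !iotaK.
exists (fun r => beta x1 (iota r)); split.
- by move=> u v; rewrite iotaD bD2.
- by move=> x y; have [s ->] := x1_gen x; rewrite b_bal m3 muK.
- move=> psi _ psiE; apply: functional_extensionality => r.
  by rewrite -{1}(iotaK r) -psiE.
Qed.

Lemma bij_of_inj_surj (T : choiceType) (U : eqType) (h : T -> U) :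
  injective h -> (forall u, exists t, h t = u) -> bijective h.
Proof.
move=> h_inj h_surj; have h_surjb u : exists t, h t == u.
  by have [t <-] := h_surj u; exists t.
have hK u : h (xchoose (h_surjb u)) = u by apply/eqP/(xchooseP (h_surjb u)).
by exists (fun u => xchoose (h_surjb u)) => [t|u]; [apply: h_inj|].
Qed.

Lemma idem_reg_eq1 (R : pzRingType) (e : R) :
  e * e = e -> (forall a, a * e = 0 -> a = 0) -> e = 1.
Proof.
move=> ee e_reg; apply/esym/eqP; rewrite -subr_eq0; apply/eqP/e_reg.
by rewrite mulrBl mul1r ee subrr.
Qed.

Section Restriction.
Variables (k : comPzRingType) (A B : algType k) (f : B -> A).
Hypotheses (hf : nu_alg_hom f) (f1 : f 1 = 1).

Definition restriction_bimod : bimod B A.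
Proof.
refine (@Bimod k B A A 0 +%R -%R (fun b y => f b * y) (fun y a => y * a)
  _ _ _ _ _ _ _ _ _ _ _ _ _ _) => *.
- exact: addrA.
- exact: addrC.
- exact: add0r.
- exact: addNr.
- exact: mulrDr.
- by case: hf => hD _ _; rewrite hD mulrDl.
- by case: hf => _ _ hM; rewrite hM mulrA.
- by rewrite f1 mul1r.
- exact: mulrDl.
- exact: mulrDr.
- exact: mulrA.
- exact: mulr1.
- exact: mulrA.
- by case: hf => _ hZ _; rewrite hZ f1 -scalerAl mul1r -scalerAr mulr1.
Defined.

End Restriction.

Section Modulation.
Variables (k : comPzRingType) (A B : algType k) (f : B -> A).
Hypothesis hf : nu_alg_hom f.
Local Notation X := (modulation hf).

Lemma modulation_val_inj (x y : X) : proj1_sig x = proj1_sig y -> x = y.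
Proof.
case: x y => [x px] [y py] /= exy; subst y.
by rewrite (proof_irrelevance _ px py).
Qed.

Lemma nu_alg_hom_mul1 b : f b * f 1 = f b.
Proof. by case: hf => _ _ hM; rewrite -hM mulr1. Qed.

Lemma nu_alg_hom_1mul b : f 1 * f b = f b.
Proof. by case: hf => _ _ hM; rewrite -hM mul1r. Qed.

Lemma in_left_ideal_hom b : in_left_ideal (f 1) (f b).
Proof. by exists (f b); rewrite nu_alg_hom_mul1. Qed.

Definition modulation_hom (b : B) : X := exist _ (f b) (in_left_ideal_hom b).

Lemma modulation_invertible_inj : invertible_bimod X -> injective f.
Proof.
case=> Y [_ [nu [nu_bal _ nu_r nu_univ]]] b1 b2 f12.
apply: (act_r_faithful nu_bal nu_univ nu_r) => x.
by apply: modulation_val_inj; rewrite /= f12.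
Qed.


Lemma modulation_invertible_of_bij (f1 : f 1 = 1) : bijective f -> invertible_bimod X.
Proof.
case=> g fK gK; have [hD _ hM] := hf.
have gD : {morph g : u v / u + v} by move=> u v; apply: (can_inj fK); rewrite hD !gK.
have gM : {morph g : u v / u * v} by move=> u v; apply: (can_inj fK); rewrite hM !gK.
have ideal_all a : in_left_ideal (f 1) a by exists a; rewrite f1 mulr1.
pose Y := restriction_bimod hf f1.
exists Y; split.
- apply: (@tensor_iso_unit_of_generator _ _ _ X Y (fun (x : X) (y : Y) => proj1_sig x * (y : A))
    (exist _ 1 (ideal_all 1) : X)).
  + by split=> * /=; rewrite ?mulrDl ?mulrDr ?mulrA.
  + by move=> * /=; rewrite mulrA.
  + by move=> * /=; rewrite mulrA.
  + by move=> x; exists (g (proj1_sig x)); apply: modulation_val_inj; rewrite /= gK mul1r.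
  + by exists id => y; rewrite /= mul1r.
- apply: (@tensor_iso_unit_of_generator _ _ _ Y X (fun (y : Y) (x : X) => g ((y : A) * proj1_sig x))
    (1 : A)).
  + by split=> * /=; rewrite ?mulrDl ?mulrDr ?gD ?mulrA.
  + by move=> * /=; rewrite -mulrA gM fK.
  + by move=> * /=; rewrite mulrA gM fK.
  + by move=> y; exists y; rewrite /= mul1r.
  + exists (fun b => exist _ (f b) (ideal_all (f b))) => [x | b] /=.
    * by apply: modulation_val_inj; rewrite /= mul1r gK.
    * by rewrite mul1r fK.
Qed.

Hypothesis f1C : forall a : A, a * f 1 = f 1 * a.

Lemma modulation_act1 (x : X) : bm_l (f 1) x = x.
Proof.
apply: modulation_val_inj; case: x => x [a xa] /=; rewrite xa.
by rewrite mulrA -f1C -mulrA nu_alg_hom_mul1.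
Qed.

Lemma in_left_ideal_mulr x a : in_left_ideal (f 1) x -> in_left_ideal (f 1) (x * a).
Proof. by case=> c ->; exists (c * a); rewrite -!mulrA f1C. Qed.

Definition modulation_mulr (a : A) (x : X) : X :=
  exist _ (proj1_sig x * a) (in_left_ideal_mulr a (proj2_sig x)).

Lemma modulation_invertible_f1 : invertible_bimod X -> f 1 = 1.
Proof.
case=> Y [[mu [mu_bal mu_l _ mu_univ]] _].
exact: (central_act_id_eq1 mu_bal mu_univ mu_l f1C modulation_act1).
Qed.

Lemma modulation_invertible_surj :
  invertible_bimod X -> forall x, in_left_ideal (f 1) x -> exists b, f b = x.
Proof.
case=> Y [[mu [mu_bal _ mu_r mu_univ]] [nu [nu_bal nu_l nu_r nu_univ]]] _ [a ->].
have [b mulr_a] : exists b, forall y x, nu y (modulation_mulr a x) = nu y (bm_r x b).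
  apply: (@linear_endo_act_r _ _ _ _ _ nu nu_bal nu_univ nu_l nu_r (modulation_mulr a)).
  - by move=> x x'; apply: modulation_val_inj; rewrite /= mulrDl.
  - by move=> c x; apply: modulation_val_inj; rewrite /= mulrA.
have := @balanced_universal_separates _ _ _ _ _ mu mu_bal mu_univ mu_r nu
  (@proj1_sig _ _) nu_univ (fun _ _ => erefl) (fun _ _ => erefl) _ _
  (mulr_a^~ (modulation_hom 1)).
move=> /= f1a; exists b.
by rewrite -nu_alg_hom_1mul -f1a f1C.
Qed.

End Modulation.

Theorem lemma2p3 (k : comPzRingType) (A B : algType k) (f : B -> A)
  (hf : nu_alg_hom f) (hcent : forall a : A, a * f 1 = f 1 * a) :
  invertible_bimod (modulation hf) <->
  ((injective f /\ (forall x : A, in_left_ideal (f 1) x -> exists b : B, f b = x))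
   /\ (forall a : A, (a * f 1 = 0 \/ f 1 * a = 0) -> a = 0)).
Proof.
split=> [inv | [[f_inj f_surj] f1_reg]].
- have f1 := modulation_invertible_f1 hcent inv.
  split; first by split; [exact: modulation_invertible_inj inv |
                          exact: modulation_invertible_surj hcent inv].
  by move=> a; rewrite f1 mulr1 mul1r => -[].
- have f1 : f 1 = 1.
    by apply: idem_reg_eq1 (nu_alg_hom_mul1 hf 1) _ => a a0; apply: f1_reg; left.
  apply: (modulation_invertible_of_bij hf f1); apply: bij_of_inj_surj f_inj _ => a.
  by apply: f_surj; exists a; rewrite f1 mulr1.
Qed.
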